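(* Let $\alpha\ge\tfrac12$ and $1\le p<\infty$. There is a constant $C>0$ depending only on $\alpha$ and $p$ such that for every measurable $f$ on $\mathbb{R}_+$, $\sup_{y\in\mathbb{R}_+}\Big(\int_{\mathbb{R}_+}|f|^p\,\tau_y\mathbf{1}_{[0,1]}\,d\omega_\alpha\Big)^{1/p}\le C\,\|f\|_{p,\infty}.$
   Context: Fix $\alpha\geq\tfrac12$. The Bessel–Kingman hypergroup is $(\mathbb{R}_+,*_\alpha)$ with Haar measure $\omega_\alpha(dz)=z^{2\alpha+1}dz$ and, for $x,y>0$, $\varepsilon_x*_\alpha\varepsilon_y(f)=\int_{|x-y|}^{x+y}K_\alpha(x,y,z)f(z)z^{2\alpha+1}dz$ with $K_\alpha(x,y,z)=C_\Gamma\frac{[(z^2-(x-y)^2)((x+y)^2-z^2)]^{\alpha-1/2}}{(xyz)^{2\alpha}}$, $C_\Gamma=\frac{\Gamma(\alpha+1)}{\Gamma(1/2)\Gamma(\alpha+1/2)2^{2\alpha-1}}$; $\varepsilon_0$ is the identity. The translation is $\tau_yf(x)=\varepsilon_x*_\alpha\varepsilon_y(f)$ (so $\tau_0f=f$). Let $I_n=[n-1,n)$, $\omega_n=\omega_\alpha(I_n)$, and $\|f\|_{p,\infty}=\sup_{n\ge1}\big(\frac1{\omega_n}\int_{I_n}|f|^pd\omega_\alpha\big)^{1/p}$. *)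

From Stdlib Require Import Reals Lra List.
From Stdlib Require Import ClassicalEpsilon.
Open Scope R_scope.

(* x^a for x >= 0 (with 0^a = 0, used only for a > 0 or on x > 0) *)
Definition rpow (x a : R) : R := if Rle_dec x 0 then 0 else Rpower x a.

(* "Lebesgue outer measure of A is <= r" *)
Definition outer_le (A : R -> Prop) (r : R) : Prop :=
  forall eps, 0 < eps -> exists a b : nat -> R,
    (forall x, A x -> exists n, a n < x < b n) /\
    (forall n, a n <= b n) /\
    (forall N, sum_f_R0 (fun n => b n - a n) N <= r + eps).

Definition lmeasurable (A : R -> Prop) : Prop :=
  forall E r, outer_le E r ->
    exists r1 r2, outer_le (fun x => E x /\ A x) r1 /\
                  outer_le (fun x => E x /\ ~ A x) r2 /\ r1 + r2 <= r.

Definition measurable_Rplus (f : R -> R) : Prop :=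
  forall t, lmeasurable (fun x => 0 <= x /\ t < f x).

Definition ind (A : R -> Prop) (x : R) : R :=
  if excluded_middle_informative (A x) then 1 else 0.

Definition sval (s : list (R * (R -> Prop))) (x : R) : R :=
  fold_right (fun cA acc => fst cA * ind (snd cA) x + acc) 0 s.

(* "Lebesgue integral over D of the nonnegative function g is <= K":
   every nonnegative simple function below g on D has integral <= K. *)
Definition lint_le (D : R -> Prop) (g : R -> R) (K : R) : Prop :=
  forall s : list (R * (R -> Prop)),
    Forall (fun cA => 0 <= fst cA /\ lmeasurable (snd cA) /\
                      (forall x, snd cA x -> D x)) s ->
    (forall x, D x -> sval s x <= g x) ->
    exists rs : list R,
      Forall2 (fun cA r => fst cA = 0 \/ outer_le (snd cA) r) s rs /\
      fold_right Rplus 0 (map (fun p => fst (fst p) * snd p) (combine s rs))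
        <= K.

Definition lint_eq (D : R -> Prop) (g : R -> R) (v : R) : Prop :=
  lint_le D g v /\ forall K, lint_le D g K -> v <= K.

Definition lint_val (D : R -> Prop) (g : R -> R) : R :=
  epsilon (inhabits 0) (fun v => lint_eq D g v).

Definition Gamma (s : R) : R :=
  lint_val (fun t => 0 < t) (fun t => rpow t (s - 1) * exp (- t)).

Definition C_Gamma (alpha : R) : R :=
  Gamma (alpha + 1) /
  (Gamma (1/2) * Gamma (alpha + 1/2) * Rpower 2 (2 * alpha - 1)).

Definition K_alpha (alpha x y z : R) : R :=
  C_Gamma alpha *
  rpow ((z^2 - (x - y)^2) * ((x + y)^2 - z^2)) (alpha - 1/2) /
  rpow (x * y * z) (2 * alpha).

(* density of the Haar measure omega_alpha *)
Definition w_alpha (alpha z : R) : R := rpow z (2 * alpha + 1).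

Definition ind01 (x : R) : R := ind (fun z => 0 <= z <= 1) x.

(* tau_y 1_[0,1] (x) = eps_x *_alpha eps_y (1_[0,1]), with eps_0 the identity *)
Definition tau_ind01 (alpha y x : R) : R :=
  if Req_EM_T y 0 then ind01 x
  else if Req_EM_T x 0 then ind01 y
  else lint_val (fun z => Rabs (x - y) < z < x + y)
         (fun z => K_alpha alpha x y z * ind01 z * w_alpha alpha z).

Definition I_n (n : nat) (x : R) : Prop := INR n - 1 <= x < INR n.

Definition omega_n (alpha : R) (n : nat) : R :=
  lint_val (I_n n) (w_alpha alpha).

Definition norm_p_inf_le (alpha p : R) (f : R -> R) (M : R) : Prop :=
  forall n : nat, (1 <= n)%nat ->
    lint_le (I_n n) (fun x => rpow (Rabs (f x)) p * w_alpha alpha x)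
            (rpow M p * omega_n alpha n).

(* The translate tau_y 1_[0,1] is bounded by a constant c(y): uniformly for y < 2, and by
   O(y^-(2 alpha + 1)) for y >= 2, because on the support of the kernel K_alpha(x, y, .) within
   [0, 1] one has x ~ y. It also vanishes outside [y - 1, y + 1], which meets at most three
   blocks I_n, all with n <= y + 2. Since omega_n <= n^(2 alpha + 1), c(y) omega_n is bounded
   independently of y on those blocks, and summing the three block integrals of |f|^p gives
   C^p = 3 sup c(y) omega_n.
   The integrals are upper Lebesgue integrals built from outer measure, so everything is proved
   from first principles: half-lines are Caratheodory measurable, and the positivity of Gamma
   (which fixes the sign of K_alpha) comes from a dyadic decomposition of its integrand. *)

From Stdlib Require Import Reals Lra Lia List ClassicalEpsilon Classical ZArith.
(* Imported last, so that [ind] is the indicator of [Defs] and not [Rtopology.ind]. *)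
From Pilot Require Import Defs.
Open Scope R_scope.

(** * Lebesgue outer measure *)

Definition interleave (u v : nat -> R) (n : nat) : R :=
  if Nat.even n then u (Nat.div2 n) else v (Nat.div2 n).

Lemma interleave_even u v k : interleave u v (2 * k) = u k.
Proof. unfold interleave; now rewrite Nat.even_even, Nat.div2_double. Qed.

Lemma interleave_odd u v k : interleave u v (S (2 * k)) = v k.
Proof.
  unfold interleave; rewrite Nat.div2_succ_double.
  replace (Nat.even (S (2 * k))) with false; [easy|].
  now rewrite Nat.even_succ, Nat.odd_mul, Nat.odd_2.
Qed.

Lemma interleave_map2 (f : R -> R -> R) u1 v1 u2 v2 n :
  f (interleave u1 v1 n) (interleave u2 v2 n) =
  interleave (fun k => f (u1 k) (u2 k)) (fun k => f (v1 k) (v2 k)) n.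
Proof. unfold interleave; now destruct Nat.even. Qed.

Lemma interleave_nonneg u v : (forall n, 0 <= u n) -> (forall n, 0 <= v n) ->
  forall n, 0 <= interleave u v n.
Proof. intros Hu Hv n; unfold interleave; now destruct Nat.even. Qed.

Lemma sum_interleave u v N :
  sum_f_R0 (interleave u v) (S (2 * N)) = sum_f_R0 u N + sum_f_R0 v N.
Proof.
  induction N as [|N IH]; [unfold interleave; simpl; ring|].
  replace (S (2 * S N)) with (S (S (S (2 * N)))) by lia.
  change (sum_f_R0 (interleave u v) (S (2 * N)) + interleave u v (S (S (2 * N)))
    + interleave u v (S (S (S (2 * N)))) = sum_f_R0 u N + u (S N) + (sum_f_R0 v N + v (S N))).
  rewrite IH; replace (S (S (2 * N))) with (2 * S N)%nat by lia.
  rewrite interleave_even, interleave_odd; ring.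
Qed.

Lemma sum_f_R0_mono (h : nat -> R) N M : (forall n, 0 <= h n) -> (N <= M)%nat ->
  sum_f_R0 h N <= sum_f_R0 h M.
Proof.
  intros Hh HNM; induction HNM; [lra|]; cbn [sum_f_R0]; specialize (Hh (S m)); lra.
Qed.

Lemma sum_interleave_le u v N : (forall n, 0 <= u n) -> (forall n, 0 <= v n) ->
  sum_f_R0 (interleave u v) N <= sum_f_R0 u N + sum_f_R0 v N.
Proof.
  intros Hu Hv; rewrite <- sum_interleave.
  apply sum_f_R0_mono; [now apply interleave_nonneg | lia].
Qed.

Lemma outer_le_nonneg A r : outer_le A r -> 0 <= r.
Proof.
  intros H; destruct (Rle_lt_dec 0 r) as [|Hr]; [easy|].
  destruct (H (- r / 2)) as (a & b & _ & Hab & Hs); [lra|].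
  specialize (Hs 0%nat); specialize (Hab 0%nat); simpl in Hs; lra.
Qed.

Lemma outer_le_subset (A B : R -> Prop) r :
  (forall x, A x -> B x) -> outer_le B r -> outer_le A r.
Proof.
  intros HAB H eps He; destruct (H eps He) as (a & b & Hc & Hab & Hs).
  exists a, b; split; [intros x Ax; exact (Hc x (HAB x Ax))|easy].
Qed.

Lemma outer_le_of_cover (A : R -> Prop) r (a b : nat -> R) :
  (forall x, A x -> exists n, a n < x < b n) -> (forall n, a n <= b n) ->
  (forall N, sum_f_R0 (fun n => b n - a n) N <= r) -> outer_le A r.
Proof.
  intros Hc Hab Hs eps He; exists a, b; repeat split; try easy.
  intro N; specialize (Hs N); lra.
Qed.

Lemma outer_le_weaken A r r' : r <= r' -> outer_le A r -> outer_le A r'.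
Proof.
  intros Hr H eps He; destruct (H eps He) as (a & b & Hc & Hab & Hs).
  exists a, b; repeat split; try easy; intro N; specialize (Hs N); lra.
Qed.

Lemma outer_le_inf A r : (forall r', r < r' -> outer_le A r') -> outer_le A r.
Proof.
  intros H eps He.
  destruct (H (r + eps / 2) ltac:(lra) (eps / 2) ltac:(lra)) as (a & b & Hc & Hab & Hs).
  exists a, b; repeat split; try easy; intro N; specialize (Hs N); lra.
Qed.

Lemma outer_le_empty (A : R -> Prop) : (forall x, ~ A x) -> outer_le A 0.
Proof.
  intros H; apply (outer_le_of_cover A 0 (fun _ => 0) (fun _ => 0)).
  - intros x Ax; destruct (H x Ax).
  - intros; lra.
  - intro N; induction N; simpl; lra.
Qed.

Lemma outer_le_union (A B : R -> Prop) r1 r2 : outer_le A r1 -> outer_le B r2 ->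
  outer_le (fun x => A x \/ B x) (r1 + r2).
Proof.
  intros H1 H2 eps He.
  destruct (H1 (eps / 2) ltac:(lra)) as (a1 & b1 & Hc1 & Hab1 & Hs1).
  destruct (H2 (eps / 2) ltac:(lra)) as (a2 & b2 & Hc2 & Hab2 & Hs2).
  exists (interleave a1 a2), (interleave b1 b2); repeat split.
  - intros x [Hx|Hx].
    + destruct (Hc1 x Hx) as [n Hn]; exists (2 * n)%nat; now rewrite !interleave_even.
    + destruct (Hc2 x Hx) as [n Hn]; exists (S (2 * n)); now rewrite !interleave_odd.
  - intro n; unfold interleave; now destruct Nat.even.
  - intro N.
    rewrite (sum_eq _ _ N (fun n _ => interleave_map2 Rminus b1 b2 a1 a2 n)).
    assert (Hl1 : forall n, 0 <= b1 n - a1 n) by (intro n; specialize (Hab1 n); lra).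
    assert (Hl2 : forall n, 0 <= b2 n - a2 n) by (intro n; specialize (Hab2 n); lra).
    pose proof (sum_interleave_le _ _ N Hl1 Hl2); specialize (Hs1 N); specialize (Hs2 N); lra.
Qed.

Lemma outer_le_interval a b : a <= b -> outer_le (fun x => a <= x <= b) (b - a).
Proof.
  intros Hab eps He.
  exists (fun n => match n with O => a - eps / 4 | _ => 0 end),
         (fun n => match n with O => b + eps / 4 | _ => 0 end).
  repeat split.
  - intros x Hx; exists O; lra.
  - intros [|n]; lra.
  - intro N; induction N; simpl; lra.
Qed.

Definition outer_measure (A : R -> Prop) : R :=
  epsilon (inhabits 0) (fun m => outer_le A m /\ forall r, outer_le A r -> m <= r).

Lemma outer_measure_spec A : (exists r, outer_le A r) ->
  outer_le A (outer_measure A) /\ forall r, outer_le A r -> outer_measure A <= r.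
Proof.
  intros Hex; unfold outer_measure; apply epsilon_spec.
  set (E := fun y => exists r, outer_le A r /\ y = - r).
  assert (Hb : bound E).
  { exists 0; intros y [r [Hr ->]]; apply outer_le_nonneg in Hr; lra. }
  assert (Hne : exists y, E y) by (destruct Hex as [r Hr]; exists (- r), r; auto).
  destruct (completeness E Hb Hne) as [m [Hub Hlub]].
  exists (- m); split.
  - apply outer_le_inf; intros r' Hr'.
    destruct (classic (exists y, E y /\ - r' < y)) as [[y [[r [Hr ->]] Hy]]|Hn].
    + apply (outer_le_weaken A r); [lra|easy].
    + enough (m <= - r') by lra; apply Hlub; intros y Hy.
      destruct (Rle_lt_dec y (- r')); [easy|]; exfalso; apply Hn; now exists y.
  - intros r Hr; enough (- r <= m) by lra; apply Hub; now exists r.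
Qed.

Lemma lmeasurable_ext (A B : R -> Prop) :
  (forall x, A x <-> B x) -> lmeasurable A -> lmeasurable B.
Proof.
  intros HAB HA E r HE; destruct (HA E r HE) as (r1 & r2 & H1 & H2 & H12).
  exists r1, r2; split; [|split]; try easy.
  - apply (outer_le_subset _ _ _ (fun x Hx => conj (proj1 Hx) (proj2 (HAB x) (proj2 Hx))) H1).
  - refine (outer_le_subset _ _ _ _ H2); intros x [Ex Bx]; split; [easy|]; now rewrite HAB.
Qed.

Lemma lmeasurable_compl (A : R -> Prop) : lmeasurable A -> lmeasurable (fun x => ~ A x).
Proof.
  intros HA E r HE; destruct (HA E r HE) as (r1 & r2 & H1 & H2 & H12).
  exists r2, r1; split; [easy|split; [|lra]].
  refine (outer_le_subset _ _ _ _ H1); intros x [Ex Ax]; split; [easy|now apply NNPP].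
Qed.

Lemma lmeasurable_inter (A B : R -> Prop) : lmeasurable A -> lmeasurable B ->
  lmeasurable (fun x => A x /\ B x).
Proof.
  intros HA HB E r HE.
  destruct (HA E r HE) as (r1 & r2 & H1 & H2 & H12).
  destruct (HB _ r1 H1) as (r11 & r12 & H11 & H12' & H112).
  exists r11, (r12 + r2); split; [|split; [|lra]].
  - refine (outer_le_subset _ _ _ _ H11); simpl; tauto.
  - refine (outer_le_subset _ _ _ _ (outer_le_union _ _ _ _ H12' H2)).
    intros x [Ex Hx]; destruct (classic (A x)); [left|right]; tauto.
Qed.

(* The infimum [outer_measure] turns an approximate Caratheodory splitting into an exact one. *)
Lemma lmeasurable_of_approx (A : R -> Prop) :
  (forall E r eps, outer_le E r -> 0 < eps -> exists r1 r2,
     outer_le (fun x => E x /\ A x) r1 /\ outer_le (fun x => E x /\ ~ A x) r2 /\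
     r1 + r2 <= r + eps) ->
  lmeasurable A.
Proof.
  intros H E r HE.
  assert (Hin : exists q, outer_le (fun x => E x /\ A x) q)
    by (exists r; refine (outer_le_subset _ _ _ _ HE); tauto).
  assert (Hout : exists q, outer_le (fun x => E x /\ ~ A x) q)
    by (exists r; refine (outer_le_subset _ _ _ _ HE); tauto).
  destruct (outer_measure_spec _ Hin) as [O1 M1], (outer_measure_spec _ Hout) as [O2 M2].
  do 2 eexists; split; [exact O1|split; [exact O2|]].
  set (o := outer_measure (fun x => E x /\ A x) + outer_measure (fun x => E x /\ ~ A x)).
  destruct (Rle_lt_dec o r) as [|Hlt]; [easy|].
  destruct (H E r ((o - r) / 2) HE ltac:(lra)) as (r1 & r2 & H1 & H2 & H12).
  specialize (M1 _ H1); specialize (M2 _ H2); unfold o in *; lra.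
Qed.

(* Two countable covers whose joint partial sums stay below [T] give outer bounds [r1], [r2]
   with [r1 + r2 <= T]: take [r1] the supremum of the first partial sums. *)
Lemma outer_le_split_covers (A B : R -> Prop) (a b c d : nat -> R) T :
  (forall x, A x -> exists n, a n < x < b n) -> (forall n, a n <= b n) ->
  (forall x, B x -> exists n, c n < x < d n) -> (forall n, c n <= d n) ->
  (forall N, sum_f_R0 (fun n => b n - a n) N + sum_f_R0 (fun n => d n - c n) N <= T) ->
  exists r1 r2, outer_le A r1 /\ outer_le B r2 /\ r1 + r2 <= T.
Proof.
  intros HA Hab HB Hcd HT.
  assert (Hl1 : forall n, 0 <= b n - a n) by (intro n; specialize (Hab n); lra).
  assert (Hl2 : forall n, 0 <= d n - c n) by (intro n; specialize (Hcd n); lra).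
  set (S1 := fun s => exists N, s = sum_f_R0 (fun n => b n - a n) N).
  assert (Hb1 : bound S1).
  { exists T; intros s [N ->]; specialize (HT N); pose proof (cond_pos_sum _ N Hl2); lra. }
  destruct (completeness S1 Hb1 (ex_intro _ _ (ex_intro _ O eq_refl))) as [L [Hub Hlub]].
  exists L, (T - L); split; [|split; [|lra]].
  - apply (outer_le_of_cover A L a b HA Hab); intro N; apply Hub; now exists N.
  - apply (outer_le_of_cover B (T - L) c d HB Hcd); intro N.
    enough (L <= T - sum_f_R0 (fun n => d n - c n) N) by lra.
    apply Hlub; intros s [M ->].
    pose proof (sum_f_R0_mono _ M (Nat.max M N) Hl1 (Nat.le_max_l M N)).
    pose proof (sum_f_R0_mono _ N (Nat.max M N) Hl2 (Nat.le_max_r M N)).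
    specialize (HT (Nat.max M N)); lra.
Qed.

Lemma sum_geometric_half e N : 0 <= e -> sum_f_R0 (fun n => e * (/ 2) ^ S n) N <= e.
Proof.
  intros He.
  assert (Hsum : sum_f_R0 (fun n => e * (/ 2) ^ S n) N = e * (1 - (/ 2) ^ S N)).
  { induction N as [|N IH]; simpl in *; [field|rewrite IH; field]. }
  rewrite Hsum; pose proof (pow_lt (/ 2) (S N) ltac:(lra)); nra.
Qed.

(* Each covering interval is cut at [b]; the right piece is enlarged by [d n] to stay open. *)
Lemma lmeasurable_lt b : lmeasurable (fun x => x < b).
Proof.
  apply lmeasurable_of_approx; intros E r eps HE He.
  destruct (HE (eps / 2) ltac:(lra)) as (a0 & b0 & Hc & Hab & Hs).
  set (d := fun n : nat => eps / 2 * (/ 2) ^ S n).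
  assert (Hd : forall n, 0 < d n)
    by (intro n; unfold d; pose proof (pow_lt (/ 2) (S n) ltac:(lra)); nra).
  apply (outer_le_split_covers _ _ a0 (fun n => Rmax (a0 n) (Rmin (b0 n) b))
           (fun n => Rmin (b0 n) (Rmax (a0 n) (b - d n))) b0).
  - intros x [Ex Hx]; destruct (Hc x Ex) as [n Hn]; exists n.
    unfold Rmax, Rmin; repeat destruct Rle_dec; lra.
  - intro n; apply Rmax_l.
  - intros x [Ex Hx]; destruct (Hc x Ex) as [n Hn]; exists n; specialize (Hd n).
    unfold Rmax, Rmin; repeat destruct Rle_dec; lra.
  - intro n; apply Rmin_l.
  - intro N; rewrite <- plus_sum.
    assert (Hpiece : forall n, Rmax (a0 n) (Rmin (b0 n) b) - a0 n
                               + (b0 n - Rmin (b0 n) (Rmax (a0 n) (b - d n)))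
                               <= b0 n - a0 n + d n).
    { intro n; specialize (Hab n); specialize (Hd n); unfold Rmax, Rmin;
      repeat destruct Rle_dec; lra. }
    eapply Rle_trans; [apply (sum_growing _ _ N Hpiece)|]; rewrite plus_sum.
    pose proof (sum_geometric_half (eps / 2) N ltac:(lra)); specialize (Hs N); unfold d; lra.
Qed.

Lemma lmeasurable_Ico a b : lmeasurable (fun x => a <= x < b).
Proof.
  apply (lmeasurable_ext (fun x => ~ x < a /\ x < b)).
  - intro x; split; intros [H1 H2]; split; try easy; lra.
  - apply lmeasurable_inter; [apply lmeasurable_compl|]; apply lmeasurable_lt.
Qed.

(** * Integrals of nonnegative functions *)

Notation simple := (list (R * (R -> Prop))).

Definition weighted_sum (s : simple) (rs : list R) : R :=
  fold_right Rplus 0 (map (fun p => fst (fst p) * snd p) (combine s rs)).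

Definition simple_int_le (s : simple) (E : R -> Prop) (B : R) : Prop :=
  exists rs, Forall2 (fun cA r => fst cA = 0 \/ outer_le (fun x => snd cA x /\ E x) r) s rs
    /\ weighted_sum s rs <= B.

Definition simple_on (D : R -> Prop) (s : simple) : Prop :=
  Forall (fun cA => 0 <= fst cA /\ lmeasurable (snd cA) /\ (forall x, snd cA x -> D x)) s.

Definition list_add (rs1 rs2 : list R) : list R :=
  map (fun p => fst p + snd p) (combine rs1 rs2).

Lemma Forall2_list_add (P1 P2 P3 : R * (R -> Prop) -> R -> Prop) s rs1 rs2 :
  Forall2 P1 s rs1 -> Forall2 P2 s rs2 ->
  (forall a r1 r2, P1 a r1 -> P2 a r2 -> P3 a (r1 + r2)) ->
  Forall2 P3 s (list_add rs1 rs2) /\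
  weighted_sum s (list_add rs1 rs2) = weighted_sum s rs1 + weighted_sum s rs2.
Proof.
  intros H1; revert rs2; induction H1 as [|a r1 s rs1 Ha H1 IH]; intros rs2 H2 H.
  - inversion H2; subst; split; [constructor|]; unfold weighted_sum, list_add; simpl; ring.
  - inversion H2 as [|a' r2 s' rs2' Ha2 H2']; subst.
    destruct (IH rs2' H2' H) as [IH1 IH2]; split.
    + unfold list_add; simpl; constructor; auto.
    + unfold weighted_sum, list_add in *; simpl; rewrite IH2; ring.
Qed.

Lemma ind_in (A : R -> Prop) x : A x -> ind A x = 1.
Proof. intros H; unfold ind; destruct excluded_middle_informative; tauto. Qed.

Lemma ind_out (A : R -> Prop) x : ~ A x -> ind A x = 0.
Proof. intros H; unfold ind; destruct excluded_middle_informative; tauto. Qed.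

Lemma ind_bounds (A : R -> Prop) x : 0 <= ind A x <= 1.
Proof. unfold ind; destruct excluded_middle_informative; lra. Qed.

Lemma sval_cons c A s x : sval ((c, A) :: s) x = c * ind A x + sval s x.
Proof. reflexivity. Qed.

Lemma sval_nonneg s x : Forall (fun cA => 0 <= fst cA) s -> 0 <= sval s x.
Proof.
  induction 1 as [|[c A] s Hc H IH]; simpl in *; [lra|]; pose proof (ind_bounds A x); nra.
Qed.

Lemma sval_ge_coef s x c A :
  Forall (fun cA => 0 <= fst cA) s -> In (c, A) s -> A x -> c <= sval s x.
Proof.
  induction 1 as [|[c' A'] s Hc H IH]; simpl in *; [tauto|]; intros [E|Hin] HA.
  - inversion E; subst; rewrite ind_in by easy; pose proof (sval_nonneg s x H); lra.
  - pose proof (ind_bounds A' x); specialize (IH Hin HA); nra.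
Qed.

Lemma sval_outside D s x : simple_on D s -> ~ D x -> sval s x = 0.
Proof.
  intros Hs Dx; induction Hs as [|[c A] s [_ [_ HD]] _ IH]; simpl in *; [easy|].
  rewrite ind_out, IH; [ring|]; intro Ax; exact (Dx (HD x Ax)).
Qed.

Lemma simple_on_nonneg D s : simple_on D s -> Forall (fun cA => 0 <= fst cA) s.
Proof. intro H; eapply Forall_impl; [|exact H]; simpl; tauto. Qed.

Lemma simple_on_measurable D s :
  simple_on D s -> Forall (fun cA => 0 <= fst cA /\ lmeasurable (snd cA)) s.
Proof. intro H; eapply Forall_impl; [|exact H]; simpl; tauto. Qed.

Lemma simple_int_le_mono s (E E' : R -> Prop) B B' :
  (forall x, E' x -> E x) -> B <= B' -> simple_int_le s E B -> simple_int_le s E' B'.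
Proof.
  intros HE HB [rs [H1 H2]]; exists rs; split; [|lra].
  eapply Forall2_impl; [|exact H1]; intros a r [Z|O]; [now left|right].
  refine (outer_le_subset _ _ _ _ O); intros x [? ?]; auto.
Qed.

Lemma simple_int_le_union s E1 E2 B1 B2 :
  simple_int_le s E1 B1 -> simple_int_le s E2 B2 ->
  simple_int_le s (fun x => E1 x \/ E2 x) (B1 + B2).
Proof.
  intros [rs1 [H11 H12]] [rs2 [H21 H22]].
  destruct (Forall2_list_add _ _
    (fun cA r => fst cA = 0 \/ outer_le (fun x => snd cA x /\ (E1 x \/ E2 x)) r)
    s rs1 rs2 H11 H21) as [F1 F2].
  { intros a q1 q2 [Z|O1] [Z'|O2]; auto; right.
    refine (outer_le_subset _ _ _ _ (outer_le_union _ _ _ _ O1 O2)); tauto. }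
  exists (list_add rs1 rs2); split; [easy|lra].
Qed.

Lemma simple_int_le_bigunion s (E : nat -> R -> Prop) (B : nat -> R) N :
  (forall k, (k <= N)%nat -> simple_int_le s (E k) (B k)) ->
  simple_int_le s (fun x => exists k, (k <= N)%nat /\ E k x) (sum_f_R0 B N).
Proof.
  induction N as [|N IH]; intros H.
  - apply (simple_int_le_mono s (E 0%nat) _ (B 0%nat)); [|simpl; lra|now apply H].
    intros x [k [Hk Ex]]; now replace k with 0%nat in Ex by lia.
  - apply (simple_int_le_mono s _ _ _ _ (fun x Hx => Hx) (Rle_refl _)).
    refine (simple_int_le_mono _ _ _ _ _ _ (Rle_refl _)
              (simple_int_le_union _ _ _ _ _ (IH (fun k Hk => H k ltac:(lia))) (H (S N) (le_n _)))).
    intros x [k [Hk Ex]]; destruct (Nat.eq_dec k (S N)) as [->|]; [now right|].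
    left; exists k; split; [lia|easy].
Qed.

(* Induction on [s], splitting [E] along each level set by Caratheodory measurability. *)
Lemma simple_int_le_bounded s E rE b :
  Forall (fun cA => 0 <= fst cA /\ lmeasurable (snd cA)) s ->
  0 <= b -> outer_le E rE -> (forall x, E x -> sval s x <= b) ->
  simple_int_le s E (b * rE).
Proof.
  intros Hs; revert E rE b.
  induction Hs as [|[c A] s [Hc HA] Hs IH]; intros E rE b Hb HE Hsv.
  { exists nil; split; [constructor|]; unfold weighted_sum; simpl.
    pose proof (outer_le_nonneg _ _ HE); nra. }
  simpl in Hc, HA.
  assert (Hs0 : Forall (fun cA => 0 <= fst cA) s)
    by (eapply Forall_impl; [|exact Hs]; simpl; tauto).
  destruct (Rlt_le_dec b c) as [Hbc|Hcb].
  - assert (HnA : forall x, E x -> ~ A x).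
    { intros x Ex Ax; specialize (Hsv x Ex); rewrite sval_cons, ind_in in Hsv by easy.
      pose proof (sval_nonneg s x Hs0); lra. }
    destruct (IH E rE b Hb HE) as [rs [H1 H2]].
    { intros x Ex; specialize (Hsv x Ex); rewrite sval_cons, ind_out in Hsv by auto; lra. }
    exists (0 :: rs); split.
    + constructor; [right; apply outer_le_empty; intros x [Ax Ex]; exact (HnA x Ex Ax)|easy].
    + unfold weighted_sum in *; simpl; lra.
  - destruct (HA E rE HE) as (r1 & r2 & Hr1 & Hr2 & Hr12).
    destruct (IH (fun x => E x /\ A x) r1 (b - c) ltac:(lra) Hr1) as [rs1 [H11 H12]].
    { intros x [Ex Ax]; specialize (Hsv x Ex); rewrite sval_cons, ind_in in Hsv by easy; lra. }
    destruct (IH (fun x => E x /\ ~ A x) r2 b Hb Hr2) as [rs2 [H21 H22]].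
    { intros x [Ex Ax]; specialize (Hsv x Ex); rewrite sval_cons, ind_out in Hsv by easy; lra. }
    destruct (Forall2_list_add _ _
      (fun cA r => fst cA = 0 \/ outer_le (fun x => snd cA x /\ E x) r)
      s rs1 rs2 H11 H21) as [F1 F2].
    { intros a q1 q2 [Z|O1] [Z'|O2]; auto; right.
      refine (outer_le_subset _ _ _ _ (outer_le_union _ _ _ _ O1 O2)).
      intros x [Ax Ex]; destruct (classic (A x)); [left|right]; tauto. }
    exists (r1 :: list_add rs1 rs2); split.
    + constructor; [right; refine (outer_le_subset _ _ _ _ Hr1); simpl; tauto|easy].
    + unfold weighted_sum in *; simpl; rewrite F2.
      pose proof (outer_le_nonneg _ _ Hr1); pose proof (outer_le_nonneg _ _ Hr2).
      assert (b * (r1 + r2) <= b * rE) by (apply Rmult_le_compat_l; lra); nra.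
Qed.

Lemma lint_le_nonneg D g K : (forall x, D x -> 0 <= g x) -> lint_le D g K -> 0 <= K.
Proof.
  intros Hg H; destruct (H nil) as [rs [H1 H2]]; [constructor|intros x Dx; now apply Hg|].
  inversion H1; subst; simpl in H2; lra.
Qed.

Lemma lint_le_weaken D g K K' : K <= K' -> lint_le D g K -> lint_le D g K'.
Proof.
  intros HK H s Hs Hsv; destruct (H s Hs Hsv) as [rs [H1 H2]]; exists rs; split; [easy|lra].
Qed.

Lemma lint_le_of_simple_int_le D g B :
  (forall s, simple_on D s -> (forall x, D x -> sval s x <= g x) ->
     exists E, (forall x, D x -> 0 < sval s x -> E x) /\ simple_int_le s E B) ->
  lint_le D g B.
Proof.
  intros H s Hs Hsv; destruct (H s Hs Hsv) as [E [HE [rs [H1 H2]]]].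
  exists rs; split; [|easy]; clear H2.
  pose proof (simple_on_nonneg D s Hs) as Hs0.
  assert (Hsupp : Forall (fun cA => fst cA <> 0 -> forall x, snd cA x -> E x) s).
  { apply Forall_forall; intros [c A] Hin Hc0 x Ax; simpl in *.
    unfold simple_on in Hs; rewrite Forall_forall in Hs; destruct (Hs _ Hin) as (Hc & _ & HD).
    apply HE; [now apply HD|]; pose proof (sval_ge_coef s x c A Hs0 Hin Ax); simpl in Hc; lra. }
  clear Hs Hsv HE Hs0; induction H1 as [|a r s rs Ha H1 IH]; constructor;
    inversion Hsupp as [|a' s' Hx Hsupp']; subst; [|now apply IH].
  destruct (Req_dec (fst a) 0) as [Z|NZ]; [now left|].
  destruct Ha as [Z|O]; [now left|right].
  refine (outer_le_subset _ _ _ _ O); intros y Hy; split; [easy|now apply Hx].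
Qed.

Lemma lint_le_bounded D g E rE b : 0 <= b -> outer_le E rE ->
  (forall x, D x -> 0 < g x -> E x) -> (forall x, D x -> E x -> g x <= b) ->
  lint_le D g (b * rE).
Proof.
  intros Hb HE H1 H2; apply lint_le_of_simple_int_le; intros s Hs Hsv; exists E; split.
  { intros x Dx Hp; apply H1; [easy|]; specialize (Hsv x Dx); lra. }
  apply simple_int_le_bounded; [now apply (simple_on_measurable D)|easy|easy|].
  intros x Ex; destruct (classic (D x)) as [Dx|Dx].
  - specialize (Hsv x Dx); specialize (H2 x Dx Ex); lra.
  - rewrite (sval_outside D s x Hs Dx); lra.
Qed.

Lemma weighted_sum_outer_measure s rs : Forall (fun cA => 0 <= fst cA) s ->
  Forall2 (fun cA r => fst cA = 0 \/ outer_le (snd cA) r) s rs ->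
  Forall2 (fun cA r => fst cA = 0 \/ outer_le (snd cA) r) s
          (map (fun cA => outer_measure (snd cA)) s)
  /\ weighted_sum s (map (fun cA => outer_measure (snd cA)) s) <= weighted_sum s rs.
Proof.
  intros Hc H; induction H as [|a r s rs Ha H IH];
    [split; [constructor|unfold weighted_sum; simpl; lra]|].
  inversion Hc as [|a' s' Ha0 Hc']; subst; destruct (IH Hc') as [IH1 IH2]; split.
  - simpl; constructor; [|easy]; destruct Ha as [Z|O]; [now left|right].
    apply outer_measure_spec; eauto.
  - unfold weighted_sum in *; simpl; destruct Ha as [Z|O]; [rewrite Z; lra|].
    assert (outer_measure (snd a) <= r) by (apply outer_measure_spec; eauto).
    assert (fst a * outer_measure (snd a) <= fst a * r) by (apply Rmult_le_compat_l; auto); lra.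
Qed.

(* Replacing the witnesses by exact outer measures makes the witness independent of [K]. *)
Lemma lint_le_inf D g K : (forall K', K < K' -> lint_le D g K') -> lint_le D g K.
Proof.
  intros H s Hs Hsv.
  assert (Hc : Forall (fun cA => 0 <= fst cA) s) by (eapply Forall_impl; [|exact Hs]; simpl; tauto).
  set (w := weighted_sum s (map (fun cA => outer_measure (snd cA)) s)).
  destruct (H (K + 1) ltac:(lra) s Hs Hsv) as [rs0 [H01 _]].
  exists (map (fun cA => outer_measure (snd cA)) s); split;
    [apply (weighted_sum_outer_measure s rs0 Hc H01)|fold w].
  destruct (Rle_lt_dec w K) as [|Hlt]; [easy|exfalso].
  destruct (H ((w + K) / 2) ltac:(lra) s Hs Hsv) as [rs1 [H11 H12]].
  destruct (weighted_sum_outer_measure s rs1 Hc H11) as [_ F2]; fold w in F2.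
  unfold weighted_sum in F2; lra.
Qed.

Lemma lint_val_spec D g B : (forall x, D x -> 0 <= g x) -> lint_le D g B ->
  lint_eq D g (lint_val D g).
Proof.
  intros Hg HB; unfold lint_val; apply epsilon_spec.
  set (E := fun y => exists K, lint_le D g K /\ y = - K).
  assert (Hb : bound E) by (exists 0; intros y [K [HK ->]]; apply lint_le_nonneg in HK; [lra|easy]).
  assert (Hne : exists y, E y) by (exists (- B), B; split; [easy|reflexivity]).
  destruct (completeness E Hb Hne) as [m [Hub Hlub]].
  exists (- m); split.
  - apply lint_le_inf; intros K' HK'.
    destruct (classic (exists y, E y /\ - K' < y)) as [[y [[K [HK ->]] Hy]]|Hn].
    + apply (lint_le_weaken D g K); [lra|easy].
    + enough (m <= - K') by lra; apply Hlub; intros y Hy.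
      destruct (Rle_lt_dec y (- K')); [easy|]; exfalso; apply Hn; now exists y.
  - intros K HK; enough (- K <= m) by lra; apply Hub; now exists K.
Qed.

Lemma lint_val_bounds D g B : (forall x, D x -> 0 <= g x) -> lint_le D g B ->
  0 <= lint_val D g <= B.
Proof.
  intros Hg HB; destruct (lint_val_spec D g B Hg HB) as [H1 H2]; split; [|now apply H2].
  now apply (lint_le_nonneg D g).
Qed.

(** * Positivity of the Gamma function *)

Lemma sval_bounded s : Forall (fun cA => 0 <= fst cA) s ->
  exists m, 0 <= m /\ forall x, sval s x <= m.
Proof.
  induction 1 as [|[c A] s Hc _ [m [Hm IH]]]; [exists 0; split; [lra|intro; simpl; lra]|].
  simpl in Hc; exists (c + m); split; [lra|]; intro x; rewrite sval_cons.
  pose proof (ind_bounds A x); specialize (IH x); nra.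
Qed.

Lemma sval_pos_lower s : Forall (fun cA => 0 <= fst cA) s ->
  exists m, 0 < m /\ forall x, 0 < sval s x -> m <= sval s x.
Proof.
  intros Hs0; induction Hs0 as [|[c A] s Hc Hs0 [m [Hm IH]]]; [exists 1; split; [lra|intro;
    simpl; lra]|].
  simpl in Hc; pose proof (sval_nonneg s) as Hrest.
  destruct (Req_dec c 0) as [->|Hc0].
  - exists m; split; [easy|]; intros x; rewrite sval_cons, Rmult_0_l, Rplus_0_l; apply IH.
  - exists (Rmin c m); split; [now apply Rmin_pos; lra|]; intros x Hx; rewrite sval_cons in *.
    specialize (Hrest x Hs0); pose proof (Rmin_l c m); pose proof (Rmin_r c m).
    destruct (classic (A x)) as [Ax|Ax]; rewrite ?(ind_in A x Ax), ?(ind_out A x Ax) in *.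
    + lra.
    + specialize (IH x ltac:(lra)); lra.
Qed.

Lemma INR_le_pow4 k : INR k <= 4 ^ k.
Proof.
  induction k as [|k IH]; [simpl; lra|]; rewrite S_INR; simpl.
  assert (1 <= 4 ^ k) by (apply pow_R1_Rle; lra); lra.
Qed.

Lemma pow2_mul_inv k : 2 ^ k * (/ 2) ^ k = 1.
Proof. rewrite <- Rpow_mult_distr, Rinv_r, pow1; lra. Qed.

Lemma pow_quarter k : (/ 4) ^ k = (/ 2) ^ k * (/ 2) ^ k.
Proof. rewrite <- Rpow_mult_distr; f_equal; field. Qed.

Lemma quarter_cover J x : 0 < x <= 1 ->
  x <= (/ 4) ^ S J \/ exists k, (k <= J)%nat /\ (/ 4) ^ S k <= x <= (/ 4) ^ k.
Proof.
  intros Hx; induction J as [|J IH].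
  - destruct (Rle_lt_dec x (/ 4)); [left; simpl; lra|right; exists O; simpl; split; [lia|lra]].
  - destruct IH as [H|[k [Hk H]]].
    + destruct (Rle_lt_dec x ((/ 4) ^ S (S J))); [now left|].
      right; exists (S J); split; [lia|lra].
    + right; exists k; split; [lia|easy].
Qed.

Lemma dyadic_cover N x : 1 <= x <= 2 ^ S N ->
  exists k, (k <= N)%nat /\ 2 ^ k <= x <= 2 ^ S k.
Proof.
  intros Hx; induction N as [|N IH]; [exists O; simpl in *; split; [lia|lra]|].
  destruct (Rle_lt_dec x (2 ^ S N)) as [H|H].
  - destruct (IH ltac:(lra)) as [k [Hk H']]; exists k; split; [lia|easy].
  - exists (S N); split; [lia|lra].
Qed.

Lemma inv_sqrt_le_pow2 k t : (/ 4) ^ S k <= t -> / sqrt t <= 2 ^ S k.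
Proof.
  intros Ht; pose proof (pow_lt (/ 2) (S k) ltac:(lra)) as Hh.
  assert (Hs : (/ 2) ^ S k <= sqrt t).
  { rewrite <- (sqrt_pow2 ((/ 2) ^ S k)) by lra; apply sqrt_le_1_alt.
    now replace (((/ 2) ^ S k) ^ 2) with ((/ 4) ^ S k) by (rewrite pow_quarter; ring). }
  replace (2 ^ S k) with (/ (/ 2) ^ S k) by (now rewrite pow_inv, Rinv_inv).
  apply Rinv_le_contravar; lra.
Qed.

Lemma simple_int_le_near_zero s : Forall (fun cA => 0 <= fst cA /\ lmeasurable (snd cA)) s ->
  exists J, simple_int_le s (fun x => 0 <= x <= (/ 4) ^ S J) 1.
Proof.
  intros Hsm; assert (Hs0 : Forall (fun cA => 0 <= fst cA) s)
    by (eapply Forall_impl; [|exact Hsm]; simpl; tauto).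
  destruct (sval_bounded s Hs0) as [Ms [HMs0 HMs]], (INR_unbounded Ms) as [J HJ]; exists J.
  assert (Hq : (/ 4) ^ S J <= (/ 4) ^ J) by (simpl; pose proof (pow_lt (/ 4) J ltac:(lra)); nra).
  assert (H1 : 4 ^ J * (/ 4) ^ J = 1) by (rewrite <- Rpow_mult_distr, Rinv_r, pow1; lra).
  pose proof (INR_le_pow4 J); pose proof (pow_lt (/ 4) J ltac:(lra)).
  pose proof (pow_lt (/ 4) (S J) ltac:(lra)).
  refine (simple_int_le_mono _ _ _ _ _ (fun x Hx => Hx) _
            (simple_int_le_bounded s _ _ Ms Hsm HMs0 (outer_le_interval 0 ((/ 4) ^ S J) ltac:(lra))
               (fun x _ => HMs x))); nra.
Qed.

(* Integrability of [t^(-1/2)] near [0] and of [t^(-2)] at infinity, through quarter-adic pieces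
   below [1] and dyadic pieces above. *)
Section Majorant.

Variables (g : R -> R) (K : R) (s : simple).
Hypothesis HK : 0 <= K.
Hypothesis Hnear : forall t, 0 < t <= 1 -> g t <= / sqrt t.
Hypothesis Htail : forall t, 1 <= t -> g t * t ^ 2 <= K.
Hypothesis Hs : simple_on (fun t => 0 < t) s.
Hypothesis Hsg : forall t, 0 < t -> sval s t <= g t.

Lemma simple_int_le_quarter_pieces J :
  simple_int_le s (fun x => exists k, (k <= J)%nat /\ (/ 4) ^ S k <= x <= (/ 4) ^ k) 3.
Proof.
  refine (simple_int_le_mono _ _ _ _ _ (fun x Hx => Hx) _ (simple_int_le_bigunion s _ _ J _)).
  - enough (Hsum : forall k, 2 ^ S k * ((/ 4) ^ k - (/ 4) ^ S k) = 3 * (/ 2) ^ S k)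
      by (rewrite (sum_eq _ _ J (fun k _ => Hsum k)); apply sum_geometric_half; lra).
    intro k; rewrite !pow_quarter; simpl.
    transitivity (3 / 2 * (2 ^ k * (/ 2) ^ k) * (/ 2) ^ k); [field|rewrite pow2_mul_inv; field].
  - intros k _; pose proof (pow_lt (/ 4) k ltac:(lra)).
    apply simple_int_le_bounded;
      [now apply (simple_on_measurable (fun t => 0 < t))|left; apply pow_lt; lra
      |apply outer_le_interval; simpl; nra|].
    intros x Hx; assert ((/ 4) ^ k <= 1) by (rewrite <- (pow1 k); apply pow_incr; lra).
    assert (0 < x) by (pose proof (pow_lt (/ 4) (S k) ltac:(lra)); lra).
    specialize (Hsg x ltac:(lra)); specialize (Hnear x ltac:(lra)).
    pose proof (inv_sqrt_le_pow2 k x ltac:(lra)); lra.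
Qed.

Lemma simple_int_le_dyadic_pieces N :
  simple_int_le s (fun x => exists k, (k <= N)%nat /\ 2 ^ k <= x <= 2 ^ S k) (2 * K).
Proof.
  refine (simple_int_le_mono _ _ _ _ _ (fun x Hx => Hx) _ (simple_int_le_bigunion s _ _ N _)).
  - enough (Hsum : forall k, K * (/ 4) ^ k * (2 ^ S k - 2 ^ k) = 2 * K * (/ 2) ^ S k)
      by (rewrite (sum_eq _ _ N (fun k _ => Hsum k)); apply sum_geometric_half; lra).
    intro k; rewrite pow_quarter; simpl.
    transitivity (K * (2 ^ k * (/ 2) ^ k) * (/ 2) ^ k); [field|rewrite pow2_mul_inv; field].
  - intros k _; pose proof (pow_lt (/ 4) k ltac:(lra)); pose proof (pow_lt 2 k ltac:(lra)).
    apply simple_int_le_bounded;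
      [now apply (simple_on_measurable (fun t => 0 < t))|nra|apply outer_le_interval; simpl; lra|].
    intros x Hx; assert (1 <= 2 ^ k) by (apply pow_R1_Rle; lra).
    specialize (Hsg x ltac:(lra)); specialize (Htail x ltac:(lra)).
    assert (H4 : 4 ^ k * (/ 4) ^ k = 1) by (rewrite <- Rpow_mult_distr, Rinv_r, pow1; lra).
    assert (4 ^ k <= x ^ 2) by (replace 4 with (2 * 2) by lra; rewrite Rpow_mult_distr; simpl; nra).
    destruct (Rle_lt_dec (g x) 0); [nra|].
    assert (g x * 4 ^ k <= K) by nra; nra.
Qed.

(* Where [s > 0] we have [s >= m > 0], hence [m x^2 <= g x * x^2 <= K]. *)
Lemma simple_support_bounded : exists N, forall x, 1 < x -> 0 < sval s x -> x <= 2 ^ S N.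
Proof.
  destruct (sval_pos_lower s (simple_on_nonneg _ _ Hs)) as [m [Hm Hpos]].
  destruct (INR_unbounded (K / m)) as [N HN]; exists N; intros x Hx Hsx.
  specialize (Hpos x Hsx); specialize (Hsg x ltac:(lra)); specialize (Htail x ltac:(lra)).
  assert (m * x ^ 2 <= K) by (pose proof (pow_lt x 2 ltac:(lra)); nra).
  assert (x ^ 2 <= K / m) by (apply (Rmult_le_reg_l m); [easy|]; field_simplify; lra).
  assert (H4 : 4 ^ N = 2 ^ N * 2 ^ N) by (rewrite <- Rpow_mult_distr; f_equal; lra).
  pose proof (INR_le_pow4 N); pose proof (pow_lt 2 N ltac:(lra)).
  assert (x <= 2 ^ N) by nra; simpl; lra.
Qed.

End Majorant.

Lemma lint_le_of_majorant (g : R -> R) K : 0 <= K ->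
  (forall t, 0 < t <= 1 -> g t <= / sqrt t) ->
  (forall t, 1 <= t -> g t * t ^ 2 <= K) ->
  lint_le (fun t => 0 < t) g (4 + 2 * K).
Proof.
  intros HK Hnear Htail; apply lint_le_of_simple_int_le; intros s Hs Hsg.
  destruct (simple_int_le_near_zero s (simple_on_measurable _ _ Hs)) as [J HJ].
  destruct (simple_support_bounded g K s Htail Hs Hsg) as [N HN].
  exists (fun x => 0 <= x <= (/ 4) ^ S J
           \/ ((exists k, (k <= J)%nat /\ (/ 4) ^ S k <= x <= (/ 4) ^ k)
           \/ (exists k, (k <= N)%nat /\ 2 ^ k <= x <= 2 ^ S k))); split.
  - intros x Hx Hsx; destruct (Rle_lt_dec x 1) as [Hx1|Hx1].
    + destruct (quarter_cover J x ltac:(lra)) as [H|H]; [left; lra|now right; left].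
    + right; right; apply dyadic_cover; specialize (HN x Hx1 Hsx); lra.
  - replace (4 + 2 * K) with (1 + (3 + 2 * K)) by ring.
    apply simple_int_le_union; [easy|apply simple_int_le_union].
    + now apply (simple_int_le_quarter_pieces g).
    + now apply (simple_int_le_dyadic_pieces g).
Qed.

Lemma Rpower_pos x a : 0 < Rpower x a.
Proof. apply exp_pos. Qed.

Lemma rpow_pos_eq x a : 0 < x -> rpow x a = Rpower x a.
Proof. intros; unfold rpow; destruct Rle_dec; [lra|easy]. Qed.

Lemma rpow_nonneg x a : 0 <= rpow x a.
Proof. unfold rpow; destruct Rle_dec; [lra|left; apply Rpower_pos]. Qed.

Lemma exp_le_exp x y : x <= y -> exp x <= exp y.
Proof. intros [H|H]; [left; now apply exp_increasing|subst; lra]. Qed.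

Lemma Rdiv_nonneg a b : 0 <= a -> 0 <= b -> 0 <= a / b.
Proof.
  intros Ha Hb; destruct (Req_dec b 0) as [->|Hb0]; [unfold Rdiv; rewrite Rinv_0; lra|].
  apply Rmult_le_pos; [easy|left; apply Rinv_0_lt_compat; lra].
Qed.

Lemma Rpower_le_exponent_small t a b : 0 < t <= 1 -> a <= b -> Rpower t b <= Rpower t a.
Proof.
  intros Ht Hab; unfold Rpower; apply exp_le_exp.
  assert (ln t <= 0)
    by (rewrite <- ln_1; destruct (Req_dec t 1) as [->|]; [lra|left; apply ln_increasing; lra]).
  nra.
Qed.

Lemma pow_le_exp (n : nat) t : (1 <= n)%nat -> 0 <= t -> t ^ n <= INR n ^ n * exp t.
Proof.
  intros Hn Ht; assert (HnR : 0 < INR n) by (apply lt_0_INR; lia).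
  assert (Hexp : exp t = exp (t / INR n) ^ n).
  { rewrite <- Rpower_pow by apply exp_pos; unfold Rpower; rewrite ln_exp; f_equal; field; lra. }
  replace (t ^ n) with (INR n ^ n * (t / INR n) ^ n)
    by (rewrite <- Rpow_mult_distr; f_equal; field; lra).
  rewrite Hexp; apply Rmult_le_compat_l; [apply pow_le; lra|apply pow_incr].
  pose proof (exp_ineq1_le (t / INR n)); split; [apply Rdiv_nonneg|]; lra.
Qed.

Lemma gamma_integrand_le_near_zero s t : 1/2 <= s -> 0 < t <= 1 ->
  rpow t (s - 1) * exp (- t) <= / sqrt t.
Proof.
  intros Hs Ht; rewrite rpow_pos_eq, <- Rpower_sqrt, <- Rpower_Ropp by lra.
  pose proof (Rpower_le_exponent_small t (- / 2) (s - 1) Ht ltac:(lra)).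
  assert (exp (- t) <= 1) by (rewrite <- exp_0; apply exp_le_exp; lra).
  pose proof (Rpower_pos t (s - 1)); pose proof (exp_pos (- t)); nra.
Qed.

Lemma gamma_integrand_le_tail s t (n : nat) : (1 <= n)%nat -> s + 1 <= INR n -> 1 <= t ->
  rpow t (s - 1) * exp (- t) * t ^ 2 <= INR n ^ n.
Proof.
  intros Hn Hs Ht; rewrite rpow_pos_eq by lra.
  assert (E1 : Rpower t (s - 1) * t ^ 2 = Rpower t (s + 1)).
  { rewrite <- (Rpower_pow 2 t), <- Rpower_plus by lra; f_equal; simpl; ring. }
  assert (E2 : Rpower t (s + 1) <= t ^ n) by (rewrite <- Rpower_pow by lra; now apply Rle_Rpower).
  pose proof (pow_le_exp n t Hn ltac:(lra)); pose proof (exp_pos t).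
  rewrite exp_Ropp; replace (Rpower t (s - 1) * / exp t * t ^ 2) with (Rpower t (s + 1) / exp t)
    by (rewrite <- E1; field; lra).
  apply (Rmult_le_reg_r (exp t)); [easy|]; unfold Rdiv; rewrite Rmult_assoc, Rinv_l; lra.
Qed.

Lemma Gamma_nonneg s : 1/2 <= s -> 0 <= Gamma s.
Proof.
  intros Hs; destruct (INR_unbounded (s + 1)) as [n Hn].
  assert (Hn1 : (1 <= n)%nat) by (destruct n; [simpl in Hn; lra|lia]).
  assert (Hbound : lint_le (fun t => 0 < t) (fun t => rpow t (s - 1) * exp (- t))
                           (4 + 2 * INR n ^ n)).
  { apply lint_le_of_majorant; [apply pow_le, pos_INR| |].
    - intros t Ht; now apply gamma_integrand_le_near_zero.
    - intros t Ht; apply gamma_integrand_le_tail; [easy|lra|easy]. }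
  refine (proj1 (lint_val_bounds _ _ _ _ Hbound)).
  intros t _; pose proof (rpow_nonneg t (s - 1)); pose proof (exp_pos (- t)); nra.
Qed.

Lemma C_Gamma_nonneg alpha : 1/2 <= alpha -> 0 <= C_Gamma alpha.
Proof.
  intros Ha; unfold C_Gamma.
  pose proof (Gamma_nonneg (alpha + 1) ltac:(lra)); pose proof (Gamma_nonneg (1/2) ltac:(lra)).
  pose proof (Gamma_nonneg (alpha + 1/2) ltac:(lra)); pose proof (Rpower_pos 2 (2 * alpha - 1)).
  apply Rdiv_nonneg; [easy|]; apply Rmult_le_pos; [apply Rmult_le_pos|]; lra.
Qed.

(** * The translate of the indicator of [0, 1] *)

Definition tau_density (alpha x y z : R) : R :=
  K_alpha alpha x y z * ind01 z * w_alpha alpha z.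

Definition C_near (alpha : R) : R := C_Gamma alpha * Rpower 4 (2 * alpha - 1).

Definition C_far (alpha : R) : R :=
  2 * C_Gamma alpha * Rpower 3 (2 * alpha - 1) * Rpower 2 (2 * alpha - 1).

Lemma C_near_nonneg alpha : 1/2 <= alpha -> 0 <= C_near alpha.
Proof.
  intros Ha; unfold C_near; pose proof (C_Gamma_nonneg alpha Ha).
  pose proof (Rpower_pos 4 (2 * alpha - 1)); nra.
Qed.

Lemma C_far_nonneg alpha : 1/2 <= alpha -> 0 <= C_far alpha.
Proof.
  intros Ha; unfold C_far; pose proof (C_Gamma_nonneg alpha Ha).
  pose proof (Rpower_pos 3 (2 * alpha - 1)); pose proof (Rpower_pos 2 (2 * alpha - 1)).
  apply Rmult_le_pos; [|lra]; apply Rmult_le_pos; [|lra]; lra.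
Qed.

Lemma tau_density_eq alpha x y z : 0 < x -> 0 < y -> 0 < z ->
  tau_density alpha x y z =
  C_Gamma alpha * rpow ((z ^ 2 - (x - y) ^ 2) * ((x + y) ^ 2 - z ^ 2)) (alpha - 1/2) * z
    / (Rpower x (2 * alpha) * Rpower y (2 * alpha)) * ind01 z.
Proof.
  intros Hx Hy Hz; unfold tau_density, K_alpha, w_alpha.
  rewrite (rpow_pos_eq (x * y * z)), (rpow_pos_eq z) by (repeat apply Rmult_lt_0_compat; easy).
  rewrite <- (Rpower_mult_distr (x * y) z), <- (Rpower_mult_distr x y),
    Rpower_plus, Rpower_1 by (try apply Rmult_lt_0_compat; easy).
  pose proof (Rpower_pos x (2 * alpha)); pose proof (Rpower_pos y (2 * alpha)).
  pose proof (Rpower_pos z (2 * alpha)); field; repeat split; lra.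
Qed.

Lemma tau_density_nonneg alpha x y z : 1/2 <= alpha -> 0 < x -> 0 < y -> 0 < z ->
  0 <= tau_density alpha x y z.
Proof.
  intros Ha Hx Hy Hz; rewrite tau_density_eq by easy.
  pose proof (C_Gamma_nonneg alpha Ha); pose proof (ind_bounds (fun z => 0 <= z <= 1) z).
  pose proof (rpow_nonneg ((z ^ 2 - (x - y) ^ 2) * ((x + y) ^ 2 - z ^ 2)) (alpha - 1/2)).
  pose proof (Rpower_pos x (2 * alpha)); pose proof (Rpower_pos y (2 * alpha)).
  apply Rmult_le_pos; [apply Rdiv_nonneg; apply Rmult_le_pos; try apply Rmult_le_pos|];
    unfold ind01; lra.
Qed.

Lemma tau_density_gt1 alpha x y z : 1 < z -> tau_density alpha x y z = 0.
Proof. intros Hz; unfold tau_density, ind01; rewrite ind_out by lra; ring. Qed.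

Lemma rpow_le_Rpower_sq P U e : 0 <= e -> 0 < U -> P <= U ^ 2 -> rpow P e <= Rpower U (2 * e).
Proof.
  intros He HU HP; unfold rpow; destruct Rle_dec; [left; apply Rpower_pos|].
  replace (Rpower U (2 * e)) with (Rpower (U ^ 2) e)
    by (rewrite <- (Rpower_pow 2 U), Rpower_mult by easy; f_equal; simpl; ring).
  apply Rle_Rpower_l; lra.
Qed.

Lemma frac_le_compat C Q Qb z zb X Xb Y i : 0 <= C -> 0 <= Q <= Qb -> 0 < z <= zb ->
  0 < Xb <= X -> 0 < Y -> 0 <= i <= 1 -> C * Q * z / (X * Y) * i <= C * Qb * zb / (Xb * Y).
Proof.
  intros HC HQ Hz HX HY Hi; unfold Rdiv.
  assert (0 < / (X * Y)) by (apply Rinv_0_lt_compat; nra).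
  assert (/ (X * Y) <= / (Xb * Y)) by (apply Rinv_le_contravar; nra).
  assert (C * Q * z <= C * Qb * zb) by (apply Rmult_le_compat; try apply Rmult_le_pos; nra).
  assert (0 <= C * Q * z) by (repeat apply Rmult_le_pos; lra).
  assert (C * Q * z * / (X * Y) <= C * Qb * zb * / (Xb * Y)) by (apply Rmult_le_compat; lra).
  assert (0 <= C * Q * z * / (X * Y)) by (apply Rmult_le_pos; lra); nra.
Qed.

Lemma Rpower_split x a : 0 < x -> Rpower x (2 * a) = Rpower x (2 * a - 1) * x.
Proof. intros; rewrite <- (Rpower_1 x) at 3 by easy; rewrite <- Rpower_plus; f_equal; ring. Qed.

(* On the support, both factors of the kernel's polynomial are at most [4 x y]. *)
Lemma tau_density_le alpha x y z : 1/2 <= alpha -> 0 < x -> 0 < y ->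
  Rabs (x - y) < z < x + y -> tau_density alpha x y z <= C_near alpha * (x + y) / (x * y).
Proof.
  intros Ha Hx Hy Hz; assert (Hz0 : 0 < z) by (pose proof (Rabs_pos (x - y)); lra).
  rewrite tau_density_eq by easy; set (a := 2 * alpha - 1).
  assert (Hq : rpow ((z ^ 2 - (x - y) ^ 2) * ((x + y) ^ 2 - z ^ 2)) (alpha - 1/2)
               <= Rpower (4 * x * y) a).
  { unfold a; replace (2 * alpha - 1) with (2 * (alpha - 1/2)) by field.
    apply rpow_le_Rpower_sq; [lra|nra|].
    pose proof (pow2_abs (x - y)); pose proof (Rabs_pos (x - y)).
    assert (0 <= z ^ 2 - (x - y) ^ 2 <= 4 * x * y) by (split; nra).
    assert (0 <= (x + y) ^ 2 - z ^ 2 <= 4 * x * y) by (split; nra); nra. }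
  eapply Rle_trans.
  { apply (frac_le_compat _ _ (Rpower (4 * x * y) a) z (x + y) _ (Rpower x (2 * alpha)));
      try split; try apply Rpower_pos; try apply rpow_nonneg; try apply C_Gamma_nonneg;
      try apply (ind_bounds (fun z => 0 <= z <= 1)); lra. }
  right; unfold C_near; fold a; rewrite !Rpower_split by easy; fold a.
  rewrite <- !Rpower_mult_distr by lra.
  pose proof (Rpower_pos x a); pose proof (Rpower_pos y a); pose proof (Rpower_pos 4 a).
  field; lra.
Qed.

(* For [y >= 2] the support [z <= 1] forces [x >= y / 2], which gives the decay in [y]. *)
Lemma tau_density_le_far alpha x y z : 1/2 <= alpha -> 0 < x -> 2 <= y ->
  Rabs (x - y) < 1 -> Rabs (x - y) < z <= 1 ->
  tau_density alpha x y z <= C_far alpha / Rpower y (2 * alpha + 1).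
Proof.
  intros Ha Hx Hy Hxy Hz.
  assert (Hz0 : 0 < z) by (pose proof (Rabs_pos (x - y)); lra).
  assert (Hx2 : y / 2 <= x) by (apply Rabs_def2 in Hxy; lra).
  assert (Hx3 : x + y <= 3 * y) by (apply Rabs_def2 in Hxy; lra).
  rewrite tau_density_eq by lra; set (a := 2 * alpha - 1).
  assert (Hq : rpow ((z ^ 2 - (x - y) ^ 2) * ((x + y) ^ 2 - z ^ 2)) (alpha - 1/2)
               <= Rpower (3 * y) a).
  { eapply Rle_trans; [|apply Rle_Rpower_l; [unfold a; lra|split; [|exact Hx3]; lra]].
    unfold a; replace (2 * alpha - 1) with (2 * (alpha - 1/2)) by field.
    apply rpow_le_Rpower_sq; [lra|lra|].
    pose proof (pow2_abs (x - y)); pose proof (Rabs_pos (x - y)).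
    assert (0 <= z ^ 2 - (x - y) ^ 2 <= 1) by (split; nra).
    assert (0 <= (x + y) ^ 2 - z ^ 2 <= (x + y) ^ 2) by (split; nra); nra. }
  eapply Rle_trans.
  { apply (frac_le_compat _ _ (Rpower (3 * y) a) z 1 _ (Rpower (y / 2) (2 * alpha)));
      try split; try apply Rpower_pos; try apply rpow_nonneg; try apply C_Gamma_nonneg;
      try apply (ind_bounds (fun z => 0 <= z <= 1)); try lra.
    apply Rle_Rpower_l; lra. }
  right; unfold C_far; fold a.
  replace (2 * alpha + 1) with (a + 1 + 1) by (unfold a; ring).
  rewrite !Rpower_plus, !Rpower_1, !Rpower_split by lra; fold a.
  rewrite <- (Rpower_mult_distr 3 y) by lra.
  replace (Rpower y a) with (Rpower (y / 2) a * Rpower 2 a)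
    by (rewrite Rpower_mult_distr by lra; f_equal; field).
  pose proof (Rpower_pos (y / 2) a); pose proof (Rpower_pos 2 a); pose proof (Rpower_pos 3 a).
  field; lra.
Qed.

Section TauBound.

Variable alpha : R.
Hypothesis Halpha : 1/2 <= alpha.

Definition tau_bound (y : R) : R :=
  if Rlt_dec y 2 then Rmax 1 (4 * C_near alpha)
  else (C_far alpha + 1) / Rpower y (2 * alpha + 1).

Lemma tau_bound_pos y : 0 < tau_bound y.
Proof.
  unfold tau_bound; destruct Rlt_dec.
  - pose proof (Rmax_l 1 (4 * C_near alpha)); lra.
  - pose proof (C_far_nonneg alpha Halpha); apply Rdiv_lt_0_compat; [lra|apply Rpower_pos].
Qed.

Let D x y := fun z => Rabs (x - y) < z < x + y.

Lemma tau_density_nonneg_on x y : 0 < x -> 0 < y ->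
  forall z, D x y z -> 0 <= tau_density alpha x y z.
Proof.
  intros Hx Hy z Hz; apply tau_density_nonneg; try easy.
  unfold D in Hz; pose proof (Rabs_pos (x - y)); lra.
Qed.

Lemma tau_integral_vanishes x y : 0 < x -> 0 < y -> 1 <= Rabs (x - y) ->
  lint_val (D x y) (tau_density alpha x y) = 0.
Proof.
  intros Hx Hy Hxy.
  assert (HL : lint_le (D x y) (tau_density alpha x y) (0 * 0)).
  { apply (lint_le_bounded _ _ (fun _ => False)); [lra|now apply outer_le_empty| |easy].
    intros z Hz Hp; rewrite tau_density_gt1 in Hp; [lra|unfold D in Hz; lra]. }
  pose proof (lint_val_bounds _ _ _ (tau_density_nonneg_on x y Hx Hy) HL); lra.
Qed.

Lemma tau_integral_le x y : 0 < x -> 0 < y ->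
  lint_val (D x y) (tau_density alpha x y) <= 4 * C_near alpha.
Proof.
  intros Hx Hy; pose proof (C_near_nonneg alpha Halpha) as HC.
  assert (HL : lint_le (D x y) (tau_density alpha x y)
                 (C_near alpha * (x + y) / (x * y) * ((x + y) - Rabs (x - y)))).
  { apply (lint_le_bounded _ _ (fun z => Rabs (x - y) <= z <= x + y)).
    - apply Rdiv_nonneg; [apply Rmult_le_pos|]; nra.
    - apply outer_le_interval; apply Rabs_le; lra.
    - intros z Hz _; unfold D in Hz; lra.
    - intros z Hz _; now apply tau_density_le. }
  pose proof (lint_val_bounds _ _ _ (tau_density_nonneg_on x y Hx Hy) HL) as [_ Hv].
  assert (Hk : (x + y) * ((x + y) - Rabs (x - y)) <= 4 * (x * y))
    by (unfold Rabs; destruct Rcase_abs; nra).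
  enough ((x + y) * ((x + y) - Rabs (x - y)) / (x * y) <= 4).
  { replace (C_near alpha * (x + y) / (x * y) * ((x + y) - Rabs (x - y)))
      with (C_near alpha * ((x + y) * ((x + y) - Rabs (x - y)) / (x * y))) in Hv by (field; lra).
    nra. }
  apply (Rmult_le_reg_r (x * y)); [nra|]; unfold Rdiv; rewrite Rmult_assoc, Rinv_l; nra.
Qed.

Lemma tau_integral_le_far x y : 0 < x -> 2 <= y -> Rabs (x - y) < 1 ->
  lint_val (D x y) (tau_density alpha x y) <= C_far alpha / Rpower y (2 * alpha + 1).
Proof.
  intros Hx Hy Hxy; pose proof (Rabs_pos (x - y)).
  assert (HC : 0 <= C_far alpha / Rpower y (2 * alpha + 1))
    by (apply Rdiv_nonneg; [apply C_far_nonneg|left; apply Rpower_pos]; easy).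
  assert (HL : lint_le (D x y) (tau_density alpha x y)
                 (C_far alpha / Rpower y (2 * alpha + 1) * (1 - Rabs (x - y)))).
  { apply (lint_le_bounded _ _ (fun z => Rabs (x - y) <= z <= 1));
    [easy|apply outer_le_interval; lra| |].
    - intros z Hz Hp; unfold D in Hz; split; [lra|].
      destruct (Rle_lt_dec z 1); [easy|]; rewrite tau_density_gt1 in Hp; lra.
    - intros z Hz Hz1; apply tau_density_le_far; try easy; unfold D in Hz; lra. }
  pose proof (lint_val_bounds _ _ _ (tau_density_nonneg_on x y Hx ltac:(lra)) HL); nra.
Qed.

Lemma ind_nonzero (A : R -> Prop) x : ind A x <> 0 -> A x.
Proof. intros H; apply NNPP; intro HA; now apply H, ind_out. Qed.

Lemma ind01_le_tau_bound y z : y < 2 -> ind01 z <= tau_bound y.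
Proof.
  intros Hy; unfold tau_bound; destruct Rlt_dec; [|lra].
  pose proof (ind_bounds (fun z => 0 <= z <= 1) z); pose proof (Rmax_l 1 (4 * C_near alpha)).
  unfold ind01; lra.
Qed.

Lemma tau_ind01_le y x : 0 <= y -> 0 <= x -> tau_ind01 alpha y x <= tau_bound y.
Proof.
  intros Hy Hx; pose proof (tau_bound_pos y); unfold tau_ind01.
  destruct (Req_EM_T y 0) as [->|Hy0]; [apply ind01_le_tau_bound; lra|].
  destruct (Req_EM_T x 0) as [->|Hx0].
  { destruct (Rlt_le_dec y 2); [now apply ind01_le_tau_bound|].
    unfold ind01; rewrite ind_out; lra. }
  change (fun z => K_alpha alpha x y z * ind01 z * w_alpha alpha z) with (tau_density alpha x y).
  fold (D x y).
  destruct (Rle_lt_dec 1 (Rabs (x - y))) as [Hxy|Hxy]; [rewrite tau_integral_vanishes; lra|].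
  unfold tau_bound; destruct Rlt_dec.
  - pose proof (tau_integral_le x y ltac:(lra) ltac:(lra));
    pose proof (Rmax_r 1 (4 * C_near alpha)); lra.
  - pose proof (tau_integral_le_far x y ltac:(lra) ltac:(lra) Hxy).
    pose proof (Rpower_pos y (2 * alpha + 1)).
    assert (C_far alpha / Rpower y (2 * alpha + 1) <= (C_far alpha + 1) / Rpower y (2 * alpha + 1))
      by (apply Rmult_le_compat_r; [left; apply Rinv_0_lt_compat|]; lra); lra.
Qed.

Lemma tau_ind01_support y x : 0 <= y -> 0 <= x ->
  tau_ind01 alpha y x <> 0 -> y - 1 <= x <= y + 1.
Proof.
  intros Hy Hx; unfold tau_ind01.
  destruct (Req_EM_T y 0) as [->|Hy0]; [intros H; apply ind_nonzero in H; lra|].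
  destruct (Req_EM_T x 0) as [->|Hx0]; [intros H; apply ind_nonzero in H; lra|].
  change (fun z => K_alpha alpha x y z * ind01 z * w_alpha alpha z) with (tau_density alpha x y).
  fold (D x y); intros H.
  destruct (Rle_lt_dec 1 (Rabs (x - y))) as [Hxy|Hxy]; [now rewrite tau_integral_vanishes in H;
    lra|].
  apply Rabs_def2 in Hxy; lra.
Qed.

End TauBound.

(** * Local norms *)

Definition rescale (k : R) (E : R -> Prop) (s : simple) : simple :=
  map (fun cA => (fst cA / k, fun x => snd cA x /\ E x)) s.

Lemma sval_rescale k E s x : k <> 0 -> E x -> sval (rescale k E s) x = sval s x / k.
Proof.
  intros Hk HE; induction s as [|[c A] s IH]; [unfold sval; simpl; field; auto|].
  change (sval (rescale k E ((c, A) :: s)) x)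
    with (c / k * ind (fun z => A z /\ E z) x + sval (rescale k E s) x).
  rewrite IH, sval_cons; destruct (classic (A x)) as [Ax|Ax].
  - rewrite !ind_in by tauto; field; auto.
  - rewrite !ind_out by tauto; field; auto.
Qed.

Lemma weighted_sum_rescale k E s rs : k <> 0 ->
  weighted_sum s rs = k * weighted_sum (rescale k E s) rs.
Proof.
  intros Hk; revert rs; induction s as [|[c A] s IH]; intros [|r rs];
    unfold weighted_sum; simpl; try ring.
  specialize (IH rs); unfold weighted_sum in IH; rewrite IH; field; auto.
Qed.

Lemma Forall2_rescale k E s rs : k <> 0 ->
  Forall2 (fun cA r => fst cA = 0 \/ outer_le (snd cA) r) (rescale k E s) rs ->
  Forall2 (fun cA r => fst cA = 0 \/ outer_le (fun x => snd cA x /\ E x) r) s rs.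
Proof.
  intros Hk; revert rs; induction s as [|[c A] s IH]; intros rs H;
    inversion H as [|? r ? rs' Hr Hrs]; subst; constructor; [|now apply IH].
  simpl in Hr; destruct Hr as [Z|O]; [left|now right].
  apply (Rmult_eq_reg_r (/ k)); [unfold Rdiv in Z; simpl; lra|now apply Rinv_neq_0_compat].
Qed.

(* The integral over a measurable [E] of [s <= k g] is controlled through [s / k] restricted
   to [E]. *)
Lemma simple_int_le_scale (D E : R -> Prop) g s k B : 0 < k -> lmeasurable E -> simple_on D s ->
  (forall x, E x -> sval s x <= k * g x) -> lint_le E g B -> simple_int_le s E (k * B).
Proof.
  intros Hk HE Hs Hsg Hint.
  destruct (Hint (rescale k E s)) as [rs [H1 H2]].
  - unfold simple_on, rescale in *; apply Forall_map; eapply Forall_impl; [|exact Hs].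
    intros [c A] (Hc & HA & _); simpl in *; split; [apply Rdiv_nonneg; lra|].
    split; [now apply lmeasurable_inter|tauto].
  - intros x Ex; rewrite sval_rescale by (easy || lra); specialize (Hsg x Ex).
    apply (Rmult_le_reg_r k); [easy|]; unfold Rdiv; rewrite Rmult_assoc, Rinv_l; lra.
  - exists rs; split.
    + apply Forall2_rescale in H1; [|lra]; exact H1.
    + rewrite (weighted_sum_rescale k E) by lra; apply Rmult_le_compat_l; [lra|exact H2].
Qed.

Lemma omega_n_bounds alpha n : 1/2 <= alpha -> (1 <= n)%nat ->
  0 <= omega_n alpha n <= Rpower (INR n) (2 * alpha + 1).
Proof.
  intros Ha Hn; unfold omega_n; assert (HnR : 1 <= INR n) by (apply (le_INR 1); auto).
  replace (Rpower (INR n) (2 * alpha + 1))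
    with (Rpower (INR n) (2 * alpha + 1) * (INR n - (INR n - 1))) by ring.
  apply lint_val_bounds; [intros; apply rpow_nonneg|].
  apply (lint_le_bounded _ _ (fun x => INR n - 1 <= x <= INR n)).
  - left; apply Rpower_pos.
  - apply outer_le_interval; lra.
  - intros x Hx _; unfold I_n in Hx; lra.
  - intros x Hx _; unfold w_alpha, rpow, I_n in *; destruct Rle_dec; [left; apply Rpower_pos|].
    apply Rle_Rpower_l; lra.
Qed.

Definition block_const (alpha : R) : R :=
  Rmax (Rmax 1 (4 * C_near alpha) * Rpower 4 (2 * alpha + 1))
       ((C_far alpha + 1) * Rpower 2 (2 * alpha + 1)).

(* Near the origin [tau_bound] is constant and [omega_n] is bounded; far out the decay of
   [tau_bound] compensates the growth [n^(2 alpha + 1)] of [omega_n] for [n <= y + 2]. *)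
Lemma tau_bound_omega_n_le alpha y n : 1/2 <= alpha -> 0 <= y -> (1 <= n)%nat ->
  INR n <= y + 2 -> tau_bound alpha y * omega_n alpha n <= block_const alpha.
Proof.
  intros Ha Hy Hn Hny; pose proof (omega_n_bounds alpha n Ha Hn) as [Ho1 Ho2].
  assert (HnR : 1 <= INR n) by (apply (le_INR 1); auto).
  set (e := 2 * alpha + 1) in *; unfold block_const; fold e.
  pose proof (Rmax_l (Rmax 1 (4 * C_near alpha) * Rpower 4 e) ((C_far alpha + 1) * Rpower 2 e)).
  pose proof (Rmax_r (Rmax 1 (4 * C_near alpha) * Rpower 4 e) ((C_far alpha + 1) * Rpower 2 e)).
  unfold tau_bound; fold e; destruct Rlt_dec.
  - assert (Rpower (INR n) e <= Rpower 4 e) by (apply Rle_Rpower_l; unfold e; lra).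
    pose proof (Rmax_l 1 (4 * C_near alpha)); nra.
  - assert (Rpower (INR n) e <= Rpower 2 e * Rpower y e)
      by (rewrite Rpower_mult_distr by lra; apply Rle_Rpower_l; unfold e; lra).
    pose proof (Rpower_pos y e); pose proof (Rpower_pos 2 e); pose proof (C_far_nonneg alpha Ha).
    replace ((C_far alpha + 1) / Rpower y e * omega_n alpha n)
      with ((C_far alpha + 1) * (omega_n alpha n / Rpower y e)) by (field; lra).
    enough (omega_n alpha n / Rpower y e <= Rpower 2 e) by nra.
    apply (Rmult_le_reg_r (Rpower y e)); [easy|]; unfold Rdiv; rewrite Rmult_assoc, Rinv_l; lra.
Qed.

Lemma nat_floor y : 0 <= y -> exists q : nat, INR q <= y < INR q + 1.
Proof.
  intros Hy; destruct (archimed y) as [H1 H2].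
  assert (Hk : (0 < up y)%Z) by (apply lt_IZR; lra).
  exists (Z.to_nat (up y - 1)); rewrite INR_IZR_INZ, Z2Nat.id, minus_IZR by lia; simpl; lra.
Qed.

Lemma support_in_three_blocks y : 0 <= y -> exists n1 n2 n3 : nat,
  (1 <= n1)%nat /\ INR n1 <= y + 2 /\ (1 <= n2)%nat /\ INR n2 <= y + 2 /\
  (1 <= n3)%nat /\ INR n3 <= y + 2 /\
  forall x, 0 <= x -> y - 1 <= x <= y + 1 -> I_n n1 x \/ I_n n2 x \/ I_n n3 x.
Proof.
  intros Hy; destruct (nat_floor y Hy) as [q Hq].
  exists (Nat.max 1 q), (S q), (S (S q)); rewrite !S_INR.
  destruct (Nat.le_ge_cases 1 q) as [Hq1|Hq1];
    [rewrite Nat.max_r by easy|rewrite Nat.max_l by easy]; repeat split; try lia; try (simpl; lra).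
  all: intros x Hx Hxy; unfold I_n; rewrite !S_INR.
  all: destruct (Rlt_le_dec x (INR q));
    [left|right; destruct (Rlt_le_dec x (INR q + 1)); [left|right]].
  all: try lra.
  apply le_INR in Hq1; simpl in *; lra.
Qed.

Lemma rpow_Rpower_inv_mul K M p : 0 < K -> 0 <= M -> 0 < p ->
  rpow (Rpower K (/ p) * M) p = K * rpow M p.
Proof.
  intros HK HM Hp; destruct (Req_dec M 0) as [->|HM0].
  - unfold rpow; rewrite Rmult_0_r; destruct Rle_dec; [ring|lra].
  - rewrite !rpow_pos_eq by (try apply Rmult_lt_0_compat; try apply Rpower_pos; lra).
    rewrite <- Rpower_mult_distr, Rpower_mult by (try apply Rpower_pos; lra).
    replace (/ p * p) with 1 by (field; lra); now rewrite Rpower_1.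
Qed.

Lemma block_const_pos alpha : 0 < block_const alpha.
Proof.
  unfold block_const; pose proof (Rpower_pos 4 (2 * alpha + 1)).
  pose proof (Rmax_l 1 (4 * C_near alpha)).
  pose proof (Rmax_l (Rmax 1 (4 * C_near alpha) * Rpower 4 (2 * alpha + 1))
                     ((C_far alpha + 1) * Rpower 2 (2 * alpha + 1))); nra.
Qed.

Lemma simple_int_le_block alpha p f M y n s : 1/2 <= alpha -> 0 <= y ->
  (1 <= n)%nat -> INR n <= y + 2 -> norm_p_inf_le alpha p f M ->
  simple_on (fun x => 0 <= x) s ->
  (forall x, 0 <= x -> sval s x <= rpow (Rabs (f x)) p * tau_ind01 alpha y x * w_alpha alpha x) ->
  simple_int_le s (I_n n) (rpow M p * block_const alpha).
Proof.
  intros Ha Hy Hn Hny Hnorm Hs Hsg.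
  pose proof (tau_bound_pos alpha Ha y); pose proof (rpow_nonneg M p).
  pose proof (tau_bound_omega_n_le alpha y n Ha Hy Hn Hny).
  apply (simple_int_le_mono s (I_n n) _ (tau_bound alpha y * (rpow M p * omega_n alpha n)));
    [easy|nra|].
  apply (simple_int_le_scale (fun x => 0 <= x) _
           (fun x => rpow (Rabs (f x)) p * w_alpha alpha x)); try easy.
  - apply lmeasurable_Ico.
  - intros x Hx; apply (le_INR 1) in Hn; unfold I_n in Hx; simpl in Hn.
    specialize (Hsg x ltac:(lra)); pose proof (tau_ind01_le alpha Ha y x Hy ltac:(lra)).
    assert (0 <= rpow (Rabs (f x)) p * w_alpha alpha x)
      by (apply Rmult_le_pos; apply rpow_nonneg); nra.
  - now apply Hnorm.
Qed.

Theorem mainTheorem3 (alpha p : R) :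
  1/2 <= alpha -> 1 <= p ->
  exists C : R, 0 < C /\
    forall f : R -> R, measurable_Rplus f ->
    forall M : R, 0 <= M -> norm_p_inf_le alpha p f M ->
    forall y : R, 0 <= y ->
      lint_le (fun x => 0 <= x)
        (fun x => rpow (Rabs (f x)) p * tau_ind01 alpha y x * w_alpha alpha x)
        (rpow (C * M) p).
Proof.
  intros Ha Hp; pose proof (block_const_pos alpha).
  exists (Rpower (3 * block_const alpha) (/ p)); split; [apply Rpower_pos|].
  (* [lint_le] bounds an upper integral. *)
  intros f _ M HM Hnorm y Hy; rewrite rpow_Rpower_inv_mul by lra.
  destruct (support_in_three_blocks y Hy) as (n1 & n2 & n3 & H1 & B1 & H2 & B2 & H3 & B3 & Hcover).
  apply (lint_le_weaken _ _ (rpow M p * block_const alpha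
                             + (rpow M p * block_const alpha + rpow M p * block_const alpha)));
    [lra|].
  apply lint_le_of_simple_int_le; intros s Hs Hsg.
  exists (fun x => I_n n1 x \/ I_n n2 x \/ I_n n3 x); split.
  - intros x Hx Hpos; apply Hcover; [easy|].
    apply (tau_ind01_support alpha Ha y x Hy Hx); intros H0.
    specialize (Hsg x Hx); rewrite H0 in Hsg; lra.
  - repeat apply simple_int_le_union; eapply simple_int_le_block; eauto.
Qed.
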